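(* For every $n\ge0$, $$\{\varphi(R(\tau)):\tau\in Y_n\}=\{P\cup K(P): P\in\mathrm{NCP}_n\}.$$
   Context: Planar binary trees: $Y_0=\{|\}$, $Y_n=\{\sigma\vee\tau:\sigma\in Y_k,\tau\in Y_l,k+l=n-1\}$, $\sigma\vee\tau$ being the tree whose root has left subtree $\sigma$ and right subtree $\tau$; $Y=\bigcup_nY_n$. $R:Y\to Y$ is defined by $R(|)=|$, $R(\sigma\vee\tau)=(|\vee R(\sigma))\vee R(\tau)$. $\mathrm{NCP}_n$ is the set of noncrossing partitions of $[n]=\{1,\dots,n\}$ ($\mathrm{NCP}_0=\{\emptyset\}$), ordered by refinement ($P\le Q$ if every block of $P$ lies in a block of $Q$). For $P\in\mathrm{NCP}_m$, $Q\in\mathrm{NCP}_l$: $P*Q\in\mathrm{NCP}_{m+l}$ is the concatenation ($Q$ shifted by $m$); $P\,\underline*\,Q$ is obtained from $P*Q$ by merging the block of $P$ containing $m$ with the block containing $m+l$ (with $\emptyset*Q=Q$, $\emptyset\,\underline*\,Q=Q$, $P\,\underline*\,\emptyset=P$). $|$ denotes the unique partition of $[1]$. For partitions $P,Q$ of $[n]$, $P\cup Q$ is the partition of $[2n]$ whose blocks are $\{2i-1:i\in V\}$ for $V\in P$ and $\{2i:i\in W\}$ for $W\in Q$. The Kreweras complement $K(P)$ of $P\in\mathrm{NCP}_n$ is the largest $Q\in\mathrm{NCP}_n$ such that $P\cup Q$ is noncrossing. The bijection $\varphi:Y\to\mathrm{NCP}$ is defined by $\varphi(|)=\emptyset$ and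 $\varphi(\sigma\vee\tau)=\varphi(\sigma)*(|\,\underline*\,\varphi(\tau))$; equivalently, labelling the vertices of $\tau\in Y_n$ by $1,\dots,n$ in left-to-right order (vertices of left subtree, root, vertices of right subtree), the blocks of $\varphi(\tau)$ are the classes of the equivalence relation generated by ''$x$ is the right child of $y$''. *)

From HB Require Import structures.
From mathcomp Require Import all_boot all_order.
From mathcomp Require Import finmap.
Set Implicit Arguments. Unset Strict Implicit. Unset Printing Implicit Defensive.
Local Open Scope fset_scope.

Inductive tree : Type := Leaf : tree | Node : tree -> tree -> tree.
(* Node s t = s \vee t *)

(* number of internal vertices: tau \in Y_n iff tree_size tau = n *)
Fixpoint tree_size (t : tree) : nat :=
  match t with Leaf => 0 | Node s u => (tree_size s + tree_size u).+1 end.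

Fixpoint Rt (t : tree) : tree :=
  match t with Leaf => Leaf | Node s u => Node (Node Leaf (Rt s)) (Rt u) end.

Definition setpart := {fset {fset nat}}.

Definition is_partition (n : nat) (P : setpart) : Prop :=
  (forall B, B \in P -> B != fset0) /\
  (forall B, B \in P -> forall x, x \in B -> 1 <= x <= n) /\
  (forall x, 1 <= x <= n -> exists2 B, B \in P & x \in B) /\
  (forall B C x, B \in P -> C \in P -> x \in B -> x \in C -> B = C).

Definition noncrossing (P : setpart) : Prop :=
  forall B C a b c d, B \in P -> C \in P -> B <> C ->
    a < b -> b < c -> c < d ->
    a \in B -> c \in B -> b \in C -> d \in C -> False.

Definition NCP (n : nat) (P : setpart) : Prop := is_partition n P /\ noncrossing P.

Definition refines (P Q : setpart) : Prop :=
  forall B, B \in P -> exists2 C, C \in Q & B `<=` C.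

Definition shiftB (m : nat) (B : {fset nat}) : {fset nat} := [fset (x + m)%N | x in B].

Definition pconcat (m : nat) (P Q : setpart) : setpart :=
  P `|` [fset shiftB m B | B : {fset nat} in Q].

(* P _* Q for P a partition of [m], Q of [l]: merge block of m with block of m+l;
   with the conventions (empty) _* Q = Q and P _* (empty) = P *)
Definition pmerge (m l : nat) (P Q : setpart) : setpart :=
  if m == 0 then Q else if l == 0 then P else
  let S := pconcat m P Q in
  [fset B : {fset nat} in S | (m \notin B) && ((m + l)%N \notin B)]
    `|` [fset \bigcup_(B <- S | (m \in B) || ((m + l)%N \in B)) B].

Definition pone : setpart := [fset [fset 1]].

Fixpoint phi (t : tree) : setpart :=
  match t with
  | Leaf => fset0
  | Node s u => pconcat (tree_size s) (phi s) (pmerge 1 (tree_size u) pone (phi u))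
  end.

Definition pcup (P Q : setpart) : setpart :=
  [fset [fset ((2 * i).-1)%N | i in V] | V : {fset nat} in P] `|` [fset [fset (2 * i)%N | i in W] | W : {fset nat} in Q].

Definition is_kreweras (n : nat) (P Q : setpart) : Prop :=
  NCP n Q /\ noncrossing (pcup P Q) /\
  (forall Q', NCP n Q' -> noncrossing (pcup P Q') -> refines Q' Q).

(** Encode a set partition by its same-block relation. Attach to each tree [t]
    of size [n] two noncrossing partitions of [[n]] by the mutual recursion
    [P(s \/ u) = (| _* K(s)) * P(u)] and [K(s \/ u) = P(s) * (| _* K(u))].
    Unfolding [R] and [phi] shows that [phi (R t)] has no block mixing parities,
    that its odd positions carry [P(t)] and its even positions [K(t)], so
    [phi (R t) = P(t) \cup K(t)].  For [i < j], [K(t)] joins [i] and [j] exactly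
    when [[i+1, j]] is a union of [P(t)]-blocks; this condition is forced on any
    [Q'] making [P(t) \cup Q'] noncrossing (a [P(t)]-block leaving [[i+1, j]]
    would cross [{2i, 2j}]), so [K(t)] is the Kreweras complement of [P(t)].
    Conversely every noncrossing partition is some [P(t)] (cut after the last
    element of the block of [1]) and some [K(t)] (cut before the first element
    of the block of [n]), by a joint induction. *)

From mathcomp Require Import all_boot all_order finmap zify.
From Stdlib Require Import Classical.
Set Implicit Arguments. Unset Strict Implicit. Unset Printing Implicit Defensive.

Definition same_block (P : setpart) (x y : nat) : Prop :=
  exists2 B, B \in P & (x \in B) && (y \in B).

Definition eq_on n (r s : nat -> nat -> Prop) : Prop :=
  forall x y, 0 < x -> x <= n -> 0 < y -> y <= n -> (r x y <-> s x y).

Lemma eq_on_sym n r s : eq_on n r s -> eq_on n s r.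
Proof. by move=> E x y *; rewrite E. Qed.

Lemma eq_on_trans n r s q : eq_on n r s -> eq_on n s q -> eq_on n r q.
Proof. by move=> E1 E2 x y *; rewrite E1 // E2. Qed.

Lemma same_block_sym P x y : same_block P x y -> same_block P y x.
Proof. by case=> B BP /andP[xB yB]; exists B => //; rewrite xB yB. Qed.

Lemma same_block_range n P x y : is_partition n P -> same_block P x y ->
  0 < x /\ x <= n /\ 0 < y /\ y <= n.
Proof.
move=> [_ [rg _]] [B BP /andP[xB yB]].
by move: (rg B BP x xB) (rg B BP y yB) => /andP[? ?] /andP[? ?].
Qed.

Lemma same_block_refl n P x : is_partition n P -> 0 < x -> x <= n -> same_block P x x.
Proof.
move=> [_ [_ [cov _]]] x0 xn; have [B BP xB] := cov x (introT andP (conj x0 xn)).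
by exists B => //; rewrite xB.
Qed.

Lemma same_block_trans n P x y z : is_partition n P ->
  same_block P x y -> same_block P y z -> same_block P x z.
Proof.
move=> [_ [_ [_ dj]]] [B BP /andP[xB yB]] [C CP /andP[yC zC]].
rewrite (dj _ _ _ CP BP yC yB) in zC.
by exists B => //; rewrite xB zC.
Qed.

Lemma partition_subset_of_same_block n P P' :
  is_partition n P -> is_partition n P' -> eq_on n (same_block P) (same_block P') ->
  forall B, B \in P -> B \in P'.
Proof.
move=> [ne [rg [_ dj]]] [_ [rg' [cov' dj']]] E B BP.
have /fset0Pn [x xB] := ne B BP; have /andP [x0 xn] := rg B BP x xB.
have [B' B'P xB'] := cov' x (introT andP (conj x0 xn)).
suff -> : B = B' by [].
apply/fsetP => y; apply/idP/idP => yin.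
- have /andP [y0 yn] := rg B BP y yin.
  have [C CP /andP [xC yC]] : same_block P' x y.
    by apply/E => //; exists B => //; rewrite xB yin.
  by rewrite (dj' _ _ _ B'P CP xB' xC).
- have /andP [y0 yn] := rg' B' B'P y yin.
  have [C CP /andP [xC yC]] : same_block P x y.
    by apply/E => //; exists B' => //; rewrite xB' yin.
  by rewrite (dj _ _ _ BP CP xB xC).
Qed.

Lemma partition_eq_of_same_block n P P' :
  is_partition n P -> is_partition n P' -> eq_on n (same_block P) (same_block P') -> P = P'.
Proof.
move=> hP hP' E; apply/fsetP => B; apply/idP/idP.
- exact: partition_subset_of_same_block hP hP' E B.
- exact: partition_subset_of_same_block hP' hP (eq_on_sym E) B.
Qed.

Lemma refines_of_same_block n Q' Q : is_partition n Q' -> is_partition n Q ->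
  (forall x y, same_block Q' x y -> same_block Q x y) -> refines Q' Q.
Proof.
move=> [ne [rg _]] [_ [_ [cov dj]]] H B BP.
have /fset0Pn [x xB] := ne B BP; have /andP [x0 xn] := rg B BP x xB.
have [C CP xC] := cov x (introT andP (conj x0 xn)).
exists C => //; apply/fsubsetP => y yB.
have [D DP /andP [xD yD]] : same_block Q x y by apply: H; exists B => //; rewrite xB yB.
by rewrite (dj _ _ _ CP DP xC xD).
Qed.

Lemma same_block_refines Q' Q x y : refines Q' Q -> same_block Q' x y -> same_block Q x y.
Proof.
move=> H [B BP /andP[xB yB]]; have [C CP /fsubsetP sub] := H B BP.
by exists C => //; rewrite !sub.
Qed.

Lemma noncrossing_same_block P a b c d : noncrossing P -> a < b -> b < c -> c < d ->
  same_block P a c -> same_block P b d -> same_block P a b.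
Proof.
move=> nc ab bc cd [B BP /andP[aB cB]] [C CP /andP[bC dC]].
case: (eqVneq B C) => [BC|BC]; first by subst C; exists B => //; rewrite aB bC.
by case: (nc B C a b c d) => //; apply/eqP.
Qed.

Definition nc_equiv n (r : nat -> nat -> Prop) : Prop :=
  [/\ forall x, 0 < x -> x <= n -> r x x,
      forall x y, 0 < x -> x <= n -> 0 < y -> y <= n -> r x y -> r y x,
      forall x y z, 0 < x -> x <= n -> 0 < y -> y <= n -> 0 < z -> z <= n ->
        r x y -> r y z -> r x z &
      forall a b c d, 0 < a -> a < b -> b < c -> c < d -> d <= n ->
        r a c -> r b d -> r a b].

Lemma nc_equiv_same_block n P : NCP n P -> nc_equiv n (same_block P).
Proof.
move=> [hP nc]; split.
- by move=> x; apply: same_block_refl hP.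
- by move=> x y *; apply: same_block_sym.
- by move=> x y z _ _ _ _ _ _; apply: same_block_trans hP.
- by move=> a b c d _ ab bc cd _; apply: noncrossing_same_block nc ab bc cd.
Qed.

Lemma NCP_of_nc_equiv n P r : is_partition n P -> nc_equiv n r ->
  eq_on n (same_block P) r -> NCP n P.
Proof.
move=> hP [_ _ _ nc] E; split => // B C a b c d BP CP BC ab bc cd aB cB bC dC.
have hac : same_block P a c by exists B => //; rewrite aB cB.
have hbd : same_block P b d by exists C => //; rewrite bC dC.
have [a0 [an [c0 cn]]] := same_block_range hP hac.
have [b0 [bn [d0 dn]]] := same_block_range hP hbd.
have [D DP /andP[aD bD]] : same_block P a b.
  by apply/E => //; apply: nc (c) (d) _ _ _ _ _ _ _; rewrite -?E.
move: hP => [_ [_ [_ dj]]].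
by apply: BC; rewrite (dj _ _ _ BP DP aB aD) (dj _ _ _ CP DP bC bD).
Qed.

Lemma nc_equiv_shift n r a b : nc_equiv n r -> a + b <= n ->
  nc_equiv b (fun x y => r (x + a) (y + a)).
Proof.
move=> [rf sy tr nc] h; split.
- move=> x *; apply: rf; lia.
- move=> x y *; apply: sy => //; lia.
- move=> x y z *; apply: tr (_ : r _ (y + a)) _; by [|lia].
- move=> x y z w *; apply: nc (_ : r _ (z + a)) (_ : r _ (w + a)); by [|lia].
Qed.

Lemma nc_equiv_le n r b : nc_equiv n r -> b <= n -> nc_equiv b r.
Proof.
move=> [rf sy tr nc] h; split.
- move=> x *; apply: rf; lia.
- move=> x y *; apply: sy => //; lia.
- move=> x y z *; apply: tr (_ : r _ y) _; by [|lia].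
- move=> x y z w *; apply: nc (_ : r _ z) (_ : r _ w); by [|lia].
Qed.

(* The relations of [P * Q] (with [P] on [[m]]) and of [| _* Q] (with [Q] on [[l]]);
   in the latter, position [x > 1] carries the point [x - 1] of [Q] and the new point
   [1] joins the class of [l]. *)
Definition rel_concat m (r s : nat -> nat -> Prop) x y : Prop :=
  (x <= m /\ y <= m /\ r x y) \/ (m < x /\ m < y /\ s (x - m) (y - m)).

Definition rel_merge1 l (s : nat -> nat -> Prop) x y : Prop :=
  if x == 1 then (if y == 1 then True else s (y - 1) l)
  else (if y == 1 then s (x - 1) l else s (x - 1) (y - 1)).

Lemma rel_concat_l m r s x y : x <= m -> y <= m -> (rel_concat m r s x y <-> r x y).
Proof. by move=> xm ym; split; [case=> [[? [? ?]]|[? [? ?]]] //; lia | left]. Qed.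

Lemma rel_concat_r m r s x y : m < x -> m < y ->
  (rel_concat m r s x y <-> s (x - m) (y - m)).
Proof. by move=> xm ym; split; [case=> [[? [? ?]]|[? [? ?]]] //; lia | right]. Qed.

Lemma rel_concat_cross m r s x y : (x <= m /\ m < y) \/ (m < x /\ y <= m) ->
  ~ rel_concat m r s x y.
Proof. by move=> H [[? [? ?]]|[? [? ?]]]; lia. Qed.

Lemma nc_equiv_concat m l r s : nc_equiv m r -> nc_equiv l s ->
  nc_equiv (m + l) (rel_concat m r s).
Proof.
move=> [rf sy tr nc] [rf' sy' tr' nc']; split.
- move=> x x0 xn; case: (leqP x m) => xm; [left|right]; do 2 split => //.
  + exact: rf.
  + apply: rf'; lia.
- move=> x y x0 xn y0 yn [[xm [ym H]]|[xm [ym H]]]; [left|right]; do 2 split => //.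
  + exact: sy.
  + apply: sy' => //; lia.
- move=> x y z x0 xn y0 yn z0 zn.
  do 2 case=> [[? [? ?]]|[? [? ?]]]; try lia; [left|right]; do 2 split => //.
  + exact: tr (_ : r _ y) _.
  + apply: tr' (_ : s _ (y - m)) _; by [|lia].
- move=> a b c d a0 ab bc cd dn.
  do 2 case=> [[? [? ?]]|[? [? ?]]]; try lia; [left|right].
  + do 2 (split; first lia); apply: nc (_ : r _ c) (_ : r _ d); by [|lia].
  + do 2 (split; first lia); apply: nc' (_ : s _ (c - m)) (_ : s _ (d - m)); by [|lia].
Qed.

Ltac case_eq1 x := let h := fresh "hx" in
  have [h|h] := eqVneq x 1; [subst x|]; rewrite /rel_merge1 ?eqxx ?(negbTE h) /=.

Lemma nc_equiv_merge1 l s : nc_equiv l s -> nc_equiv l.+1 (rel_merge1 l s).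
Proof.
move=> [rf sy tr nc]; split.
- move=> x *; case_eq1 x => //; apply: rf; lia.
- move=> x y x0 xn y0 yn; case_eq1 x; case_eq1 y => // H; apply: sy => //; lia.
- move=> x y z x0 xn y0 yn z0 zn; case_eq1 x; case_eq1 y; case_eq1 z => // H1 H2.
  + apply: tr (sy _ _ _ _ _ _ H2) H1; lia.
  + apply: tr H1 (sy _ _ _ _ _ _ H2); lia.
  + apply: tr H1 H2; lia.
  + apply: tr H1 H2; lia.
- move=> a b c d a0 ab bc cd dn.
  have [b1 c1 d1] : [/\ b != 1, c != 1 & d != 1] by split; apply/eqP; lia.
  rewrite /rel_merge1 (negbTE b1) (negbTE c1) (negbTE d1).
  case: ifP => /eqP a1 H1 H2; last by apply: nc H1 H2; lia.
  have [dl|dl] := eqVneq d l.+1; first by move: H2; rewrite dl subSS subn0.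
  (* [a = 1] stands for [l + 1], which lies after [d]: use noncrossing on [b < c < d < l+1]. *)
  have H3 : s (b - 1) (c - 1) by apply: nc H2 H1; lia.
  apply: tr H3 H1; lia.
Qed.

Lemma eq_on_concat m l r r' s s' : eq_on m r r' -> eq_on l s s' ->
  eq_on (m + l) (rel_concat m r s) (rel_concat m r' s').
Proof.
move=> E1 E2 x y x0 xn y0 yn; rewrite /rel_concat.
split; case=> [[xm [ym H]]|[xm [ym H]]]; [left|right|left|right]; do 2 split => //.
- exact/E1.
- apply/E2 => //; lia.
- exact/E1.
- apply/E2 => //; lia.
Qed.

Lemma eq_on_merge1 l s s' : eq_on l s s' -> eq_on l.+1 (rel_merge1 l s) (rel_merge1 l s').
Proof. move=> E x y *; case_eq1 x; case_eq1 y => //; apply: E; lia. Qed.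

Lemma in_pconcat m P Q B :
  B \in pconcat m P Q <-> B \in P \/ exists2 C, C \in Q & B = shiftB m C.
Proof.
rewrite /pconcat in_fsetU; split.
- by case/orP => [|/imfsetP [C CQ ->]]; [left | right; exists C].
- by case=> [->//|[C CQ ->]]; apply/orP; right; apply/imfsetP; exists C.
Qed.

Lemma in_shiftB m C x : x \in shiftB m C <-> exists2 y, y \in C & x = y + m.
Proof. by split => [/imfsetP [y yC ->]|[y yC ->]]; [exists y | apply/imfsetP; exists y]. Qed.

Lemma is_partition_pconcat m l P Q : is_partition m P -> is_partition l Q ->
  is_partition (m + l) (pconcat m P Q).
Proof.
move=> [ne [rg [cov dj]]] [ne' [rg' [cov' dj']]]; split; [|split; [|split]].
- move=> B /in_pconcat [BP|[C CQ ->]]; first exact: ne.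
  have /fset0Pn [x xC] := ne' C CQ.
  by apply/fset0Pn; exists (x + m); apply/in_shiftB; exists x.
- move=> B /in_pconcat [BP|[C CQ ->]] x.
  + by move=> /(rg B BP x) /andP [? ?]; apply/andP; lia.
  + by move=> /in_shiftB [y /(rg' C CQ) /andP [? ?] ->]; apply/andP; lia.
- move=> x /andP [x0 xn]; case: (leqP x m) => xm.
  + have [B BP xB] := cov x (introT andP (conj x0 xm)).
    by exists B => //; apply/in_pconcat; left.
  + have /cov' [C CQ xC] : 0 < x - m <= l by apply/andP; lia.
    exists (shiftB m C); first by apply/in_pconcat; right; exists C.
    by apply/in_shiftB; exists (x - m) => //; lia.
- move=> B C x /in_pconcat [BP|[B' B'Q ->]] /in_pconcat [CP|[C' C'Q ->]].
  + exact: dj.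
  + by move=> /(rg B BP) /andP [? ?] /in_shiftB [y /(rg' C' C'Q) /andP [? ?]]; lia.
  + by move=> /in_shiftB [y /(rg' B' B'Q) /andP [? ?]] ? /(rg C CP) /andP [? ?]; lia.
  + move=> /in_shiftB [y yB' ->] /in_shiftB [z zC' /eqP]; rewrite eqn_add2r => /eqP yz.
    by subst z; rewrite (dj' _ _ _ B'Q C'Q yB' zC').
Qed.

Lemma same_block_pconcat m l P Q : is_partition m P -> is_partition l Q ->
  forall x y, same_block (pconcat m P Q) x y <-> rel_concat m (same_block P) (same_block Q) x y.
Proof.
move=> hP hQ x y; split.
- move=> [B /in_pconcat [BP|[C CQ ->]] /andP [xB yB]].
  + have hs : same_block P x y by exists B => //; rewrite xB yB.
    by have := same_block_range hP hs => ?; left; do 2 (split; first lia).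
  + move: xB yB => /in_shiftB [x' x'C ->] /in_shiftB [y' y'C ->].
    have hs : same_block Q x' y' by exists C => //; rewrite x'C y'C.
    have := same_block_range hQ hs => ?.
    by right; do 2 (split; first lia); rewrite !addnK.
- case=> [[xm [ym [B BP /andP [xB yB]]]]|[xm [ym [C CQ /andP [xC yC]]]]].
  + by exists B; [apply/in_pconcat; left | rewrite xB yB].
  + exists (shiftB m C); first by apply/in_pconcat; right; exists C.
    by apply/andP; split; apply/in_shiftB; [exists (x - m)|exists (y - m)] => //; lia.
Qed.

Definition merged_block a b (S : setpart) : {fset nat} :=
  (\bigcup_(B <- S | (a \in B) || (b \in B)) B)%fset.

Definition merge_blocks a b (S : setpart) : setpart :=
  ([fset B : {fset nat} in S | (a \notin B) && (b \notin B)] `|` [fset merged_block a b S])%fset.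

Lemma pmerge_merge_blocks m l P Q : m != 0 -> l != 0 ->
  pmerge m l P Q = merge_blocks m (m + l) (pconcat m P Q).
Proof. by rewrite /pmerge => /negbTE -> /negbTE ->. Qed.

Lemma in_merge_blocks a b S B : B \in merge_blocks a b S <->
  (B \in S /\ a \notin B /\ b \notin B) \/ B = merged_block a b S.
Proof.
rewrite /merge_blocks in_fsetU in_fset1 !inE /=; split.
- by case/orP => [/and3P [h h1 h2]|/eqP ->]; [left | right].
- by case=> [[-> [-> ->]]|->]; rewrite ?eqxx ?orbT.
Qed.

Lemma in_merged_block a b (S : setpart) x : x \in merged_block a b S <->
  exists2 B, B \in S & ((a \in B) || (b \in B)) && (x \in B).
Proof.
split.
- by move/bigfcupP => [B /andP [h1 h2] h3]; exists B => //; rewrite h2 h3.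
- by move=> [B h1 /andP [h2 h3]]; apply/bigfcupP; exists B => //; rewrite h1 h2.
Qed.

Lemma is_partition_merge_blocks N a b S : is_partition N S -> 0 < a -> a <= N ->
  is_partition N (merge_blocks a b S).
Proof.
move=> [ne [rg [cov dj]]] a0 aN.
have [A0 A0S aA0] := cov a (introT andP (conj a0 aN)).
split; [|split; [|split]].
- move=> B /in_merge_blocks [[BS _]|->]; first exact: ne.
  by apply/fset0Pn; exists a; apply/in_merged_block; exists A0 => //; rewrite aA0.
- move=> B /in_merge_blocks [[BS _]|->]; first exact: rg.
  by move=> x /in_merged_block [C CS /andP [_ xC]]; apply: rg C CS x xC.
- move=> x /cov [B BS xB]; case hab: ((a \in B) || (b \in B)).
  + exists (merged_block a b S); first by apply/in_merge_blocks; right.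
    by apply/in_merged_block; exists B => //; rewrite hab xB.
  + exists B => //; apply/in_merge_blocks; left.
    by move/negbT: hab; rewrite negb_or => /andP.
- move=> B C x /in_merge_blocks [[BS [aB bB]]|->] /in_merge_blocks [[CS [aC bC]]|->] //.
  + exact: dj.
  + move=> xB /in_merged_block [D DS /andP [hD xD]].
    by move: hD; rewrite (dj _ _ _ BS DS xB xD) in aB bB *; rewrite (negbTE aB) (negbTE bB).
  + move=> /in_merged_block [D DS /andP [hD xD]] xC.
    by move: hD; rewrite (dj _ _ _ CS DS xC xD) in aC bC *; rewrite (negbTE aC) (negbTE bC).
Qed.

Lemma mem_merged_block a b S z :
  z \in merged_block a b S <-> same_block S z a \/ same_block S z b.
Proof.
rewrite in_merged_block; split.
- by move=> [D DS /andP [/orP [aD|bD] zD]]; [left|right]; exists D => //; apply/andP.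
- by move=> [[D DS /andP [zD hD]]|[D DS /andP [zD hD]]]; exists D => //; rewrite zD hD ?orbT.
Qed.

Lemma same_block_merge_blocks a b S x y :
  same_block (merge_blocks a b S) x y <-> same_block S x y \/
    ((same_block S x a \/ same_block S x b) /\ (same_block S y a \/ same_block S y b)).
Proof.
split.
- move=> [B /in_merge_blocks [[BS _] xyB|-> /andP [xM yM]]].
  + by left; exists B.
  + by right; split; apply/mem_merged_block.
- case=> [[B BS /andP [xB yB]]|[xM yM]].
  + case hab: ((a \in B) || (b \in B)).
    * exists (merged_block a b S); first by apply/in_merge_blocks; right.
      by apply/andP; split; apply/in_merged_block; exists B => //; rewrite hab ?xB ?yB.
    * exists B; last by rewrite xB yB.
      by apply/in_merge_blocks; left; move/negbT: hab; rewrite negb_or => /andP.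
  + exists (merged_block a b S); first by apply/in_merge_blocks; right.
    by apply/andP; split; apply/mem_merged_block.
Qed.

Lemma is_partition_pone : is_partition 1 pone.
Proof.
rewrite /pone; split; [|split; [|split]].
- by move=> B /fset1P ->; apply/fset0Pn; exists 1; rewrite in_fset1.
- by move=> B /fset1P -> x /fset1P ->.
- by move=> x /andP [x0 x1]; exists [fset 1]%fset; rewrite !in_fset1 //; apply/eqP; lia.
- by move=> B C x /fset1P -> /fset1P ->.
Qed.

Lemma same_block_pone x y : same_block pone x y <-> x = 1 /\ y = 1.
Proof.
split; first by move=> [B /fset1P ->] /andP [/fset1P -> /fset1P ->].
by move=> [-> ->]; exists [fset 1]%fset; rewrite !in_fset1.
Qed.

Lemma same_block_pconcat_pone l Q : is_partition l Q -> forall u v,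
  same_block (pconcat 1 pone Q) u v <->
  (u = 1 /\ v = 1) \/ (1 < u /\ 1 < v /\ same_block Q (u - 1) (v - 1)).
Proof.
move=> hQ u v; rewrite (same_block_pconcat is_partition_pone hQ) /rel_concat.
split.
- by case=> [[_ [_ /same_block_pone]]|H]; [left | right].
- by case=> [[-> ->]|H]; [left; do 2 split => //; apply/same_block_pone | right].
Qed.

Lemma is_partition_pmerge1 l Q : is_partition l Q -> is_partition l.+1 (pmerge 1 l pone Q).
Proof.
move=> hQ; have [->|l0] := eqVneq l 0; first exact: is_partition_pone.
rewrite pmerge_merge_blocks //.
exact: is_partition_merge_blocks (is_partition_pconcat is_partition_pone hQ) _ _.
Qed.

Lemma same_block_pmerge1 l Q : is_partition l Q ->
  eq_on l.+1 (same_block (pmerge 1 l pone Q)) (rel_merge1 l (same_block Q)).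
Proof.
move=> hQ x y x0 xl y0 yl; have [l0|l0] := eqVneq l 0.
  subst l; have [-> ->] : x = 1 /\ y = 1 by lia.
  by rewrite /pmerge /= /rel_merge1 /=; split => // _; apply/same_block_pone.
rewrite pmerge_merge_blocks // same_block_merge_blocks !(same_block_pconcat_pone hQ).
have with1 u : (u = 1 /\ 1 = 1) \/ (1 < u /\ 1 < 1 /\ same_block Q (u - 1) 0) <-> u = 1.
  by split => [|->]; [lia | left].
have withl u : 0 < u ->
  (u = 1 /\ 1 + l = 1) \/ (1 < u /\ 1 < 1 + l /\ same_block Q (u - 1) (1 + l - 1)) <->
  u != 1 /\ same_block Q (u - 1) l.
  move=> u0; rewrite addKn; split => [[|[u1 [_ H]]]|[/eqP u1 H]]; first lia.
  - by split => //; apply/eqP; lia.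
  - by right; do 2 (split; first lia).
rewrite !with1 !withl //.
have sQ := @same_block_sym Q; have tQ := same_block_trans hQ.
case_eq1 x; case_eq1 y; split; intuition; try lia.
- by apply: tQ (sQ _ _ _); eassumption.
- by left; right; do 2 (split; first lia).
Qed.

Definition odd_block (V : {fset nat}) : {fset nat} := [fset (2 * i).-1 | i in V]%fset.
Definition even_block (W : {fset nat}) : {fset nat} := [fset 2 * i | i in W]%fset.

Lemma in_pcup P Q B : B \in pcup P Q <->
  (exists2 V, V \in P & B = odd_block V) \/ (exists2 W, W \in Q & B = even_block W).
Proof.
rewrite /pcup in_fsetU; split.
- by case/orP => /imfsetP [V VP ->]; [left|right]; exists V.
- by case=> [[V VP ->]|[W WQ ->]]; apply/orP; [left|right]; apply/imfsetP; [exists V|exists W].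
Qed.

Lemma in_odd_block V x : x \in odd_block V <-> exists2 i, i \in V & x = (2 * i).-1.
Proof. by split => [/imfsetP [i iV ->]|[i iV ->]]; [exists i | apply/imfsetP; exists i]. Qed.

Lemma in_even_block W x : x \in even_block W <-> exists2 i, i \in W & x = 2 * i.
Proof. by split => [/imfsetP [i iW ->]|[i iW ->]]; [exists i | apply/imfsetP; exists i]. Qed.

Lemma odd_or_even_index x n : 0 < x -> x <= 2 * n ->
  exists i, 0 < i /\ i <= n /\ (x = (2 * i).-1 \/ x = 2 * i).
Proof. by move=> x0 xn; exists ((x + 1) %/ 2); lia. Qed.

Lemma is_partition_pcup n P Q : is_partition n P -> is_partition n Q ->
  is_partition (2 * n) (pcup P Q).
Proof.
move=> [ne [rg [cov dj]]] [ne' [rg' [cov' dj']]]; split; [|split; [|split]].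
- move=> B /in_pcup [[V VP ->]|[W WQ ->]].
  + have /fset0Pn [x xV] := ne V VP.
    by apply/fset0Pn; exists (2 * x).-1; apply/in_odd_block; exists x.
  + have /fset0Pn [x xW] := ne' W WQ.
    by apply/fset0Pn; exists (2 * x); apply/in_even_block; exists x.
- move=> B /in_pcup [[V VP ->]|[W WQ ->]] x.
  + by move=> /in_odd_block [i /(rg V VP) /andP [? ?] ->]; apply/andP; lia.
  + by move=> /in_even_block [i /(rg' W WQ) /andP [? ?] ->]; apply/andP; lia.
- move=> x /andP [x0 xn]; have [i [i0 [iN [->|->]]]] := odd_or_even_index x0 xn.
  + have [V VP iV] := cov i (introT andP (conj i0 iN)).
    by exists (odd_block V); [apply/in_pcup; left; exists V | apply/in_odd_block; exists i].
  + have [W WQ iW] := cov' i (introT andP (conj i0 iN)).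
    by exists (even_block W); [apply/in_pcup; right; exists W | apply/in_even_block; exists i].
- move=> B C x /in_pcup [[V VP ->]|[W WQ ->]] /in_pcup [[V' VP' ->]|[W' WQ' ->]].
  + move=> /in_odd_block [i iV ->] /in_odd_block [j jV' ij].
    move: (rg V VP i iV) (rg V' VP' j jV') => /andP [? ?] /andP [? ?].
    have {}ij : i = j by lia.
    by subst j; rewrite (dj _ _ _ VP VP' iV jV').
  + by move=> /in_odd_block [i /(rg V VP) /andP [? ?] ->] /in_even_block [j _]; lia.
  + by move=> /in_even_block [i _ ->] /in_odd_block [j /(rg V' VP') /andP [? ?]]; lia.
  + move=> /in_even_block [i iW ->] /in_even_block [j jW' ij].
    have {}ij : i = j by lia.
    by subst j; rewrite (dj' _ _ _ WQ WQ' iW jW').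
Qed.

Lemma same_block_pcup_odd n P Q i j : is_partition n P -> 0 < i -> 0 < j ->
  same_block (pcup P Q) (2 * i).-1 (2 * j).-1 <-> same_block P i j.
Proof.
move=> [_ [rg _]] i0 j0; split.
- move=> [B /in_pcup [[V VP ->]|[W WQ ->]] /andP [h1 h2]].
  + move: h1 h2 => /in_odd_block [i' iV Ei] /in_odd_block [j' jV Ej].
    move: (rg V VP i' iV) (rg V VP j' jV) => /andP [? ?] /andP [? ?].
    have -> : i = i' by lia. have -> : j = j' by lia.
    by exists V => //; rewrite iV jV.
  + by move: h1 => /in_even_block [i' _]; lia.
- move=> [V VP /andP [iV jV]]; exists (odd_block V); first by apply/in_pcup; left; exists V.
  by apply/andP; split; apply/in_odd_block; [exists i|exists j].
Qed.

Lemma not_same_block_pcup_odd_even n P Q i j : is_partition n P -> 0 < i -> 0 < j ->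
  ~ same_block (pcup P Q) (2 * i).-1 (2 * j).
Proof.
move=> [_ [rg _]] i0 j0 [B /in_pcup [[V VP ->]|[W WQ ->]] /andP [h1 h2]].
- move: h2 => /in_odd_block [j' /(rg V VP) /andP [? ?]]; lia.
- move: h1 => /in_even_block [i' _]; lia.
Qed.

Lemma same_block_pcup_even n P Q i j : is_partition n Q -> 0 < i -> 0 < j ->
  same_block (pcup P Q) (2 * i) (2 * j) <-> same_block Q i j.
Proof.
move=> [_ [rg _]] i0 j0; split.
- move=> [B /in_pcup [[V VP ->]|[W WQ ->]] /andP [h1 h2]].
  + by move: h1 => /in_odd_block [i' _]; lia.
  + move: h1 h2 => /in_even_block [i' iW Ei] /in_even_block [j' jW Ej].
    have -> : i = i' by lia. have -> : j = j' by lia.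
    by exists W => //; rewrite iW jW.
- move=> [W WQ /andP [iW jW]]; exists (even_block W); first by apply/in_pcup; right; exists W.
  by apply/andP; split; apply/in_even_block; [exists i|exists j].
Qed.

Lemma is_partition0 : is_partition 0 fset0.
Proof. by split; [|split; [|split]] => // x /andP [? ?]; lia. Qed.

Lemma tree_size_Rt t : tree_size (Rt t) = 2 * tree_size t.
Proof. by elim: t => [|s hs u hu] //=; rewrite hs hu; lia. Qed.

Fixpoint phi_rel (t : tree) : nat -> nat -> Prop :=
  match t with
  | Leaf => fun _ _ => False
  | Node s u => rel_concat (tree_size s) (phi_rel s) (rel_merge1 (tree_size u) (phi_rel u))
  end.

Lemma is_partition_phi t : is_partition (tree_size t) (phi t).
Proof.
elim: t => [|s hs u hu] /=; first exact: is_partition0.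
by rewrite -addnS; apply: is_partition_pconcat hs (is_partition_pmerge1 hu).
Qed.

Lemma eq_on_same_block_pconcat m l P Q r s :
  is_partition m P -> is_partition l Q -> eq_on m (same_block P) r -> eq_on l (same_block Q) s ->
  eq_on (m + l) (same_block (pconcat m P Q)) (rel_concat m r s).
Proof.
move=> hP hQ EP EQ; apply: eq_on_trans (eq_on_concat EP EQ).
by move=> x y *; apply: same_block_pconcat hP hQ x y.
Qed.

Lemma eq_on_same_block_pmerge1 l Q s : is_partition l Q -> eq_on l (same_block Q) s ->
  eq_on l.+1 (same_block (pmerge 1 l pone Q)) (rel_merge1 l s).
Proof. by move=> hQ EQ; apply: eq_on_trans (same_block_pmerge1 hQ) (eq_on_merge1 EQ). Qed.

Lemma same_block_phi t : eq_on (tree_size t) (same_block (phi t)) (phi_rel t).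
Proof.
elim: t => [|s Es u Eu] /=; first by move=> x y *; lia.
have hu := is_partition_phi u; rewrite -addnS.
exact: eq_on_same_block_pconcat (is_partition_phi s) (is_partition_pmerge1 hu) Es
  (eq_on_same_block_pmerge1 hu Eu).
Qed.

Lemma nc_equiv_phi_rel t : nc_equiv (tree_size t) (phi_rel t).
Proof.
elim: t => [|s hs u hu] /=; first by split => *; lia.
by rewrite -addnS; apply: nc_equiv_concat hs (nc_equiv_merge1 hu).
Qed.

Fixpoint Prel (t : tree) : nat -> nat -> Prop :=
  match t with
  | Leaf => fun _ _ => False
  | Node s u => rel_concat (tree_size s).+1 (rel_merge1 (tree_size s) (Krel s)) (Prel u)
  end
with Krel (t : tree) : nat -> nat -> Prop :=
  match t with
  | Leaf => fun _ _ => False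
  | Node s u => rel_concat (tree_size s) (Prel s) (rel_merge1 (tree_size u) (Krel u))
  end.

Fixpoint Ppart (t : tree) : setpart :=
  match t with
  | Leaf => fset0
  | Node s u => pconcat (tree_size s).+1 (pmerge 1 (tree_size s) pone (Kpart s)) (Ppart u)
  end
with Kpart (t : tree) : setpart :=
  match t with
  | Leaf => fset0
  | Node s u => pconcat (tree_size s) (Ppart s) (pmerge 1 (tree_size u) pone (Kpart u))
  end.

Lemma nc_equiv_Prel_Krel t :
  nc_equiv (tree_size t) (Prel t) /\ nc_equiv (tree_size t) (Krel t).
Proof.
elim: t => [|s [hPs hKs] u [hPu hKu]] /=; first by split; split => *; lia.
split.
- by rewrite -addSn; apply: nc_equiv_concat (nc_equiv_merge1 hKs) hPu.
- by rewrite -addnS; apply: nc_equiv_concat hPs (nc_equiv_merge1 hKu).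
Qed.

Lemma is_partition_Ppart_Kpart t :
  is_partition (tree_size t) (Ppart t) /\ is_partition (tree_size t) (Kpart t).
Proof.
elim: t => [|s [hPs hKs] u [hPu hKu]] /=; first by split; exact: is_partition0.
split.
- by rewrite -addSn; apply: is_partition_pconcat (is_partition_pmerge1 hKs) hPu.
- by rewrite -addnS; apply: is_partition_pconcat hPs (is_partition_pmerge1 hKu).
Qed.

Lemma same_block_Ppart_Kpart t :
  eq_on (tree_size t) (same_block (Ppart t)) (Prel t) /\
  eq_on (tree_size t) (same_block (Kpart t)) (Krel t).
Proof.
elim: t => [|s [EPs EKs] u [EPu EKu]] /=; first by split => x y *; lia.
have [hPs hKs] := is_partition_Ppart_Kpart s; have [hPu hKu] := is_partition_Ppart_Kpart u.
split.
- rewrite -addSn; exact: eq_on_same_block_pconcat (is_partition_pmerge1 hKs) hPu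
    (eq_on_same_block_pmerge1 hKs EKs) EPu.
- rewrite -addnS; exact: eq_on_same_block_pconcat hPs (is_partition_pmerge1 hKu) EPs
    (eq_on_same_block_pmerge1 hKu EKu).
Qed.

Definition parity_split n (r p q : nat -> nat -> Prop) : Prop :=
  forall i j, 0 < i -> i <= n -> 0 < j -> j <= n ->
  [/\ r (2 * i).-1 (2 * j).-1 <-> p i j, r (2 * i) (2 * j) <-> q i j,
      ~ r (2 * i).-1 (2 * j) & ~ r (2 * i) (2 * j).-1].

Lemma rel_merge1_1x l s y : y != 1 -> rel_merge1 l s 1 y = s (y - 1) l.
Proof. by rewrite /rel_merge1 eqxx => /negbTE ->. Qed.

Lemma rel_merge1_x1 l s x : x != 1 -> rel_merge1 l s x 1 = s (x - 1) l.
Proof. by rewrite /rel_merge1 eqxx => /negbTE ->. Qed.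

Lemma rel_merge1_xx l s x y : x != 1 -> y != 1 -> rel_merge1 l s x y = s (x - 1) (y - 1).
Proof. by rewrite /rel_merge1 => /negbTE -> /negbTE ->. Qed.

Section ParitySplitMerge1.

Variables (n : nat) (r p q : nat -> nat -> Prop).
Hypothesis rpq : parity_split n r p q.

Lemma rel_merge1_odd i j : 0 < i -> i <= n.+1 -> 0 < j -> j <= n.+1 ->
  rel_merge1 (2 * n) r (2 * i).-1 (2 * j).-1 <-> rel_merge1 n q i j.
Proof.
move=> i0 iN j0 jN; have odd_pred k : 0 < k -> (2 * k).-1 - 1 = 2 * (k - 1) by lia.
have [->|i1] := eqVneq i 1; have [->|j1] := eqVneq j 1 => //.
- rewrite rel_merge1_1x ?rel_merge1_1x ?odd_pred //; last by apply/eqP; lia.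
  by case: (@rpq (j - 1) n _ _ _ _) => //; lia.
- rewrite rel_merge1_x1 ?rel_merge1_x1 ?odd_pred //; last by apply/eqP; lia.
  by case: (@rpq (i - 1) n _ _ _ _) => //; lia.
- rewrite !rel_merge1_xx ?odd_pred //; try by apply/eqP; lia.
  by case: (@rpq (i - 1) (j - 1) _ _ _ _) => //; lia.
Qed.

Lemma rel_merge1_even i j : 0 < i -> i <= n -> 0 < j -> j <= n ->
  rel_merge1 (2 * n) r (2 * i) (2 * j) <-> p i j.
Proof.
move=> i0 iN j0 jN; rewrite rel_merge1_xx; try by apply/eqP; lia.
by rewrite !subn1; case: (@rpq i j).
Qed.

Lemma rel_merge1_mixed i j : 0 < i -> i <= n.+1 -> 0 < j -> j <= n ->
  ~ rel_merge1 (2 * n) r (2 * i).-1 (2 * j) /\ ~ rel_merge1 (2 * n) r (2 * j) (2 * i).-1.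
Proof.
move=> i0 iN j0 jN; have j1 : 2 * j != 1 by apply/eqP; lia.
have [->|i1] := eqVneq i 1.
  rewrite /= rel_merge1_1x // rel_merge1_x1 // subn1.
  by case: (@rpq j n) => //; lia.
have i1' : (2 * i).-1 != 1 by apply/eqP; lia.
rewrite !rel_merge1_xx //.
have -> : (2 * i).-1 - 1 = 2 * (i - 1) by lia.
have -> : 2 * j - 1 = (2 * j).-1 by lia.
have [_ _ _ H1] := @rpq (i - 1) j ltac:(lia) ltac:(lia) j0 jN.
have [_ _ H2 _] := @rpq j (i - 1) j0 jN ltac:(lia) ltac:(lia).
by split.
Qed.

End ParitySplitMerge1.

Lemma phi_rel_Rt_node s u x y : 0 < x -> 0 < y ->
  phi_rel (Rt (Node s u)) x y <->
  rel_concat (2 * tree_size s).+1 (rel_merge1 (2 * tree_size s) (phi_rel (Rt s)))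
    (rel_merge1 (2 * tree_size u) (phi_rel (Rt u))) x y.
Proof.
move=> x0 y0; rewrite /= !tree_size_Rt add0n /rel_concat !subn0.
split; case=> [[? [? H]]|H]; try by right.
- by left; do 2 split => //; case: H => [[? [? ?]]|[? [? ?]]] //; lia.
- by left; do 2 split => //; right.
Qed.

Section ParitySplitNode.

Variables s u : tree.
Hypotheses (IHs : parity_split (tree_size s) (phi_rel (Rt s)) (Prel s) (Krel s))
           (IHu : parity_split (tree_size u) (phi_rel (Rt u)) (Prel u) (Krel u)).
Local Notation k := (tree_size s).
Local Notation l := (tree_size u).

Lemma parity_split_node_odd i j : 0 < i -> i <= (k + l).+1 -> 0 < j -> j <= (k + l).+1 ->
  phi_rel (Rt (Node s u)) (2 * i).-1 (2 * j).-1 <-> Prel (Node s u) i j.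
Proof.
move=> i0 iN j0 jN; rewrite phi_rel_Rt_node /=; try lia.
case: (leqP i k.+1) => ik; case: (leqP j k.+1) => jk.
- rewrite !rel_concat_l; try lia; apply: (rel_merge1_odd IHs); lia.
- by split => H; exfalso; move: H; apply: rel_concat_cross; lia.
- by split => H; exfalso; move: H; apply: rel_concat_cross; lia.
- rewrite !rel_concat_r; try lia.
  have -> : (2 * i).-1 - (2 * k).+1 = 2 * (i - k.+1) by lia.
  have -> : (2 * j).-1 - (2 * k).+1 = 2 * (j - k.+1) by lia.
  apply: (rel_merge1_even IHu); lia.
Qed.

Lemma parity_split_node_even i j : 0 < i -> i <= (k + l).+1 -> 0 < j -> j <= (k + l).+1 ->
  phi_rel (Rt (Node s u)) (2 * i) (2 * j) <-> Krel (Node s u) i j.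
Proof.
move=> i0 iN j0 jN; rewrite phi_rel_Rt_node /=; try lia.
case: (leqP i k) => ik; case: (leqP j k) => jk.
- rewrite !rel_concat_l; try lia; apply: (rel_merge1_even IHs); lia.
- by split => H; exfalso; move: H; apply: rel_concat_cross; lia.
- by split => H; exfalso; move: H; apply: rel_concat_cross; lia.
- rewrite !rel_concat_r; try lia.
  have -> : 2 * i - (2 * k).+1 = (2 * (i - k)).-1 by lia.
  have -> : 2 * j - (2 * k).+1 = (2 * (j - k)).-1 by lia.
  apply: (rel_merge1_odd IHu); lia.
Qed.

Lemma parity_split_node_mixed i j : 0 < i -> i <= (k + l).+1 -> 0 < j -> j <= (k + l).+1 ->
  ~ phi_rel (Rt (Node s u)) (2 * i).-1 (2 * j) /\ ~ phi_rel (Rt (Node s u)) (2 * j) (2 * i).-1.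
Proof.
move=> i0 iN j0 jN; rewrite !phi_rel_Rt_node; try lia.
case: (leqP i k.+1) => ik; case: (leqP j k) => jk.
- by rewrite !rel_concat_l; try lia; apply: (rel_merge1_mixed IHs); lia.
- by split => H; exfalso; move: H; apply: rel_concat_cross; lia.
- by split => H; exfalso; move: H; apply: rel_concat_cross; lia.
- rewrite !rel_concat_r; try lia.
  have -> : (2 * i).-1 - (2 * k).+1 = 2 * (i - k.+1) by lia.
  have -> : 2 * j - (2 * k).+1 = (2 * (j - k)).-1 by lia.
  have [H1 H2] := @rel_merge1_mixed _ _ _ _ IHu (j - k) (i - k.+1)
    ltac:(lia) ltac:(lia) ltac:(lia) ltac:(lia).
  by split.
Qed.

End ParitySplitNode.

Lemma parity_split_phi_rel_Rt t : parity_split (tree_size t) (phi_rel (Rt t)) (Prel t) (Krel t).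
Proof.
elim: t => [|s IHs u IHu] i j i0 iN j0 jN; first by move: iN => /=; lia.
have [H1 H2] := parity_split_node_mixed IHs IHu i0 iN j0 jN.
have [H3 H4] := parity_split_node_mixed IHs IHu j0 jN i0 iN.
split => //; [exact: parity_split_node_odd | exact: parity_split_node_even].
Qed.

Definition saturated n (r : nat -> nat -> Prop) a b :=
  forall x y, a <= x -> x <= b -> 0 < y -> y <= n -> r x y -> a <= y /\ y <= b.

Definition saturation_Krel (t : tree) :=
  forall i j, 0 < i -> i < j -> j <= tree_size t ->
    saturated (tree_size t) (Prel t) i.+1 j -> Krel t i j.

Definition saturation_Prel (t : tree) :=
  forall i j, 0 < i -> i < j -> j <= tree_size t ->
    saturated (tree_size t) (Krel t) i j.-1 -> Prel t i j.

Section SaturatedNode.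

Variables s u : tree.
Local Notation k := (tree_size s).
Local Notation l := (tree_size u).
Local Notation n := (tree_size (Node s u)).

Lemma Prel_node_left x y : Krel s x y -> 0 < x -> x <= k -> 0 < y -> y <= k ->
  Prel (Node s u) x.+1 y.+1.
Proof. by move=> *; rewrite /= rel_concat_l ?rel_merge1_xx ?subSS ?subn0 //; lia. Qed.

Lemma Prel_node_right x y : Prel u x y -> 0 < x -> x <= l -> 0 < y -> y <= l ->
  Prel (Node s u) (x + k.+1) (y + k.+1).
Proof. by move=> *; rewrite /= rel_concat_r ?addnK //; lia. Qed.

Lemma Prel_node_root : Prel (Node s u) k.+1 1.
Proof.
rewrite /= rel_concat_l // /rel_merge1 eqxx.
have [->//|k0] := eqVneq k 0; rewrite ifN_eq; last by apply/eqP; lia.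
by rewrite subn1 /=; case: (nc_equiv_Prel_Krel s) => _ [rf _ _ _]; apply: rf; lia.
Qed.

Lemma Krel_node_left x y : Prel s x y -> 0 < x -> x <= k -> 0 < y -> y <= k ->
  Krel (Node s u) x y.
Proof. by move=> *; rewrite /= rel_concat_l. Qed.

Lemma Krel_node_right x y : Krel u x y -> 0 < x -> x <= l -> 0 < y -> y <= l ->
  Krel (Node s u) (x + k.+1) (y + k.+1).
Proof.
move=> *; rewrite /= rel_concat_r; try lia.
by rewrite -!addSnnS !addnK rel_merge1_xx ?subSS ?subn0 //; lia.
Qed.

Lemma Krel_node_root : Krel (Node s u) k.+1 n.
Proof.
rewrite /= rel_concat_r; try lia.
have -> : k.+1 - k = 1 by lia.
have -> : n - k = l.+1 by rewrite /=; lia.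
rewrite /rel_merge1 eqxx.
have [->//|l0] := eqVneq l 0; rewrite ifN_eq; last by apply/eqP; lia.
by rewrite subn1 /=; case: (nc_equiv_Prel_Krel u) => _ [rf _ _ _]; apply: rf; lia.
Qed.

Hypotheses (IHs : saturation_Krel s /\ saturation_Prel s)
           (IHu : saturation_Krel u /\ saturation_Prel u).

Lemma saturation_Krel_node : saturation_Krel (Node s u).
Proof.
have [[_ sPu _ _] [rKu _ _ _]] := nc_equiv_Prel_Krel u.
have [[_ Ps] [Ku _]] := (IHs, IHu); move=> i j i0 ij jn cl.
have {}jn : j <= (k + l).+1 := jn.
case: (leqP j k) => jk.
  rewrite /= rel_concat_l; try lia.
  apply: Ps => // x y ix xj y0 yk H.
  have := cl x.+1 y.+1 ltac:(lia) ltac:(lia) isT ltac:(rewrite /=; lia)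
    (Prel_node_left H ltac:(lia) ltac:(lia) y0 yk).
  lia.
case: (leqP k.+1 i) => ik; last first.
  by have := cl k.+1 1 ltac:(lia) ltac:(lia) isT ltac:(rewrite /=; lia) Prel_node_root; lia.
rewrite /= rel_concat_r; try lia.
have [ik1|ik1] := eqVneq i k.+1.
- (* [i = k + 1] is the new point of [| _* K(u)], glued to the class of [l] in [K(u)] *)
  rewrite ik1 (_ : k.+1 - k = 1); last lia.
  rewrite rel_merge1_1x; last by apply/eqP; lia.
  have [jn1|jn1] := eqVneq j (k + l).+1.
    by rewrite jn1 (_ : (k + l).+1 - k - 1 = l); [apply: rKu; lia | lia].
  apply: Ku; try lia.
  move=> x y jx xl y0 yl H; split => //.
  case: (leqP (j - k) y) => jy; first lia.
  have := cl (y + k.+1) (x + k.+1) ltac:(lia) ltac:(lia) ltac:(lia) ltac:(rewrite /=; lia)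
    (Prel_node_right (sPu x y ltac:(lia) xl y0 yl H) y0 ltac:(lia) ltac:(lia) ltac:(lia)).
  lia.
- rewrite rel_merge1_xx; try (apply/eqP; lia).
  have -> : i - k - 1 = i - k.+1 by lia.
  have -> : j - k - 1 = j - k.+1 by lia.
  apply: Ku; try lia.
  move=> x y ix xj y0 yl H.
  have := cl (x + k.+1) (y + k.+1) ltac:(lia) ltac:(lia) ltac:(lia) ltac:(rewrite /=; lia)
    (Prel_node_right H ltac:(lia) ltac:(lia) y0 yl).
  lia.
Qed.

Lemma saturation_Prel_node : saturation_Prel (Node s u).
Proof.
have [[rPs sPs _ _] [rKs _ _ _]] := nc_equiv_Prel_Krel s.
have [[Ks _] [_ Pu]] := (IHs, IHu); move=> i j i0 ij jn cl.
have {}jn : j <= (k + l).+1 := jn.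
case: (leqP k.+2 i) => ik.
  rewrite /= rel_concat_r; try lia.
  apply: Pu; try lia.
  move=> x y ix xj y0 yl H.
  have := cl (x + k.+1) (y + k.+1) ltac:(lia) ltac:(lia) ltac:(lia) ltac:(rewrite /=; lia)
    (Krel_node_right H ltac:(lia) ltac:(lia) y0 yl).
  lia.
case: (leqP j k.+1) => jk; last first.
  by have := cl k.+1 (k + l).+1 ltac:(lia) ltac:(lia) isT (leqnn _) Krel_node_root; lia.
rewrite /= rel_concat_l; try lia.
have [i1|i1] := eqVneq i 1.
- (* [i = 1] is the new point of [| _* K(s)], glued to the class of [k] in [K(s)] *)
  rewrite i1 rel_merge1_1x; last by apply/eqP; lia.
  have [jk1|jk1] := eqVneq j k.+1; first by rewrite jk1 subn1; apply: rKs; lia.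
  apply: Ks; try lia.
  move=> x y jx xk y0 yk H; split => //.
  case: (leqP j y) => jy; first lia.
  have := cl y x ltac:(lia) ltac:(lia) ltac:(lia) ltac:(rewrite /=; lia)
    (Krel_node_left (sPs x y ltac:(lia) xk y0 yk H) y0 ltac:(lia) ltac:(lia) ltac:(lia)).
  lia.
- rewrite rel_merge1_xx; try (apply/eqP; lia).
  have -> : j - 1 = (j - 1).-1.+1 by lia.
  apply: Ks; try lia.
  move=> x y ix xj y0 yk H.
  have := cl x y ltac:(lia) ltac:(lia) y0 ltac:(rewrite /=; lia)
    (Krel_node_left H ltac:(lia) ltac:(lia) y0 yk).
  lia.
Qed.

End SaturatedNode.

Lemma saturation_Prel_Krel t : saturation_Krel t /\ saturation_Prel t.
Proof.
elim: t => [|s IHs u IHu]; first by split => i j /=; lia.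
by split; [apply: saturation_Krel_node | apply: saturation_Prel_node].
Qed.

(* A [P]-block leaving [[i+1, j]] would cross the pair [{2i, 2j}] of [P \cup Q]. *)
Lemma saturated_of_noncrossing_pcup n P Q i j : is_partition n P -> is_partition n Q ->
  noncrossing (pcup P Q) -> 0 < i -> i < j -> same_block Q i j ->
  saturated n (same_block P) i.+1 j.
Proof.
move=> hP hQ nc i0 ij Qij x y ix xj y0 yn Pxy.
have [_ [_ [_ jn]]] := same_block_range hQ Qij.
have Oxy : same_block (pcup P Q) (2 * x).-1 (2 * y).-1.
  by apply/(same_block_pcup_odd _ hP) => //; lia.
have Eij : same_block (pcup P Q) (2 * i) (2 * j) by apply/(same_block_pcup_even _ hQ) => //; lia.
case: (leqP y i) => yi.
  have := noncrossing_same_block nc (_ : (2 * y).-1 < 2 * i) (_ : 2 * i < (2 * x).-1)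
    (_ : (2 * x).-1 < 2 * j) (same_block_sym Oxy) Eij.
  move=> /(_ ltac:(lia) ltac:(lia) ltac:(lia)) H.
  by case: (not_same_block_pcup_odd_even hP _ _ H); lia.
case: (leqP y j) => yj //.
have := noncrossing_same_block nc (_ : 2 * i < (2 * x).-1) (_ : (2 * x).-1 < 2 * j)
  (_ : 2 * j < (2 * y).-1) Eij Oxy.
move=> /(_ ltac:(lia) ltac:(lia) ltac:(lia)) /same_block_sym H.
by case: (not_same_block_pcup_odd_even hP _ _ H); lia.
Qed.

Lemma saturated_eq_on n r r' a b : 0 < a -> b <= n -> eq_on n r r' ->
  saturated n r a b -> saturated n r' a b.
Proof. by move=> a0 bn E cl x y ax xb y0 yn /E H; apply: cl (H _ _ _ _) => //; lia. Qed.

Lemma Krel_max t P Q : is_partition (tree_size t) P -> is_partition (tree_size t) Q ->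
  eq_on (tree_size t) (same_block P) (Prel t) -> noncrossing (pcup P Q) ->
  forall i j, same_block Q i j -> Krel t i j.
Proof.
move=> hP hQ EP nc i j Qij; have [i0 [iN [j0 jN]]] := same_block_range hQ Qij.
have [_ [rK sK _ _]] := nc_equiv_Prel_Krel t.
have lt_case x y : x < y -> same_block Q x y -> Krel t x y.
  move=> xy Qxy; have [x0 [_ [_ yN]]] := same_block_range hQ Qxy.
  apply: (saturation_Prel_Krel t).1 => //.
  exact: saturated_eq_on EP (saturated_of_noncrossing_pcup hP hQ nc x0 xy Qxy).
case: (ltngtP i j) => [ij|ji|<-]; first exact: lt_case.
- by apply: sK => //; apply: lt_case (same_block_sym Qij).
- exact: rK.
Qed.

Lemma last_witness (p : nat -> Prop) n : p 1 -> 0 < n ->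
  exists m, [/\ 0 < m, m <= n, p m & forall y, m < y -> y <= n -> ~ p y].
Proof.
move=> p1; elim: n => [|n IH] n0 //.
have [->|n_gt0] := posnP n; first by exists 1; split => // y; lia.
case: (classic (p n.+1)) => pn; first by exists n.+1; split => // y; lia.
have [m [m0 mn pm maxm]] := IH n_gt0; exists m; split => //; first lia.
by move=> y my; rewrite leq_eqVlt => /orP [/eqP ->|] //; apply: maxm.
Qed.

Lemma first_witness (p : nat -> Prop) n : p n -> 0 < n ->
  exists m, [/\ 0 < m, m <= n, p m & forall y, 0 < y -> y < m -> ~ p y].
Proof.
move=> pn n0; have q1 : (fun y => p (n.+1 - y)) 1 by rewrite /= subn1.
have [m [m0 mn pm maxm]] := @last_witness (fun y => p (n.+1 - y)) n q1 n0.
exists (n.+1 - m); split => //; try lia.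
move=> y y0 ym; rewrite -[y](@subKn y n.+1); last lia.
apply: maxm; lia.
Qed.

Section NcEquivCut.

Variables (n m : nat) (r : nat -> nat -> Prop).
Hypothesis (rn : nc_equiv n r) (m0 : 0 < m) (mn : m <= n).

Lemma nc_equiv_cut_last : r 1 m -> (forall y, m < y -> y <= n -> ~ r 1 y) ->
  forall x y, 0 < x -> x <= m -> m < y -> y <= n -> ~ r x y.
Proof.
case: rn => _ _ tr nc r1m maxm x y x0 xm my yn rxy; apply: (maxm y my yn).
have [x1|x1] := eqVneq x 1; first by rewrite -x1.
have r1x : r 1 x.
  have [xm'|xm'] := eqVneq x m; first by rewrite xm'.
  by apply: nc r1m rxy; lia.
by apply: tr r1x rxy; lia.
Qed.

Lemma nc_equiv_cut_first : r m n -> (forall y, 0 < y -> y < m -> ~ r y n) ->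
  forall x y, 0 < x -> x < m -> m <= y -> y <= n -> ~ r x y.
Proof.
case: rn => _ _ tr nc rmn minm x y x0 xm my yn rxy; apply: (minm x x0 xm).
have [yn'|yn'] := eqVneq y n; first by rewrite -yn'.
have rxm : r x m.
  have [ym|ym] := eqVneq m y; first by rewrite ym.
  by apply: nc rxy rmn; lia.
by apply: tr rxm rmn; lia.
Qed.

End NcEquivCut.

(* Merging [1] with [l + 1] undoes the removal of the point [1] from a class containing [l + 1]. *)
Lemma eq_on_merge1_succ l q q' : nc_equiv l.+1 q -> q 1 l.+1 ->
  eq_on l q' (fun x y => q x.+1 y.+1) -> eq_on l.+1 (rel_merge1 l q') q.
Proof.
move=> [rf sy tr _] q1l E x y x0 xl y0 yl.
have succ_pred z : z != 1 -> 0 < z -> (z - 1).+1 = z by lia.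
case_eq1 x; case_eq1 y.
- by split => // _; apply: rf.
- rewrite E ?succ_pred //; try lia.
  split => [qyl|q1y]; first by apply: tr q1l (sy _ _ _ _ _ _ qyl); lia.
  by apply: tr (sy _ _ _ _ _ _ q1y) q1l; lia.
- rewrite E ?succ_pred //; try lia.
  by split => [qxl|qx1]; [apply: tr qxl (sy _ _ _ _ _ _ q1l) | apply: tr qx1 q1l]; lia.
- by rewrite E ?succ_pred //; lia.
Qed.

Section TreeOfNcEquiv.

Variable n : nat.
Hypothesis IH : forall m, m < n -> forall r, nc_equiv m r ->
  (exists t, tree_size t = m /\ eq_on m (Prel t) r) /\
  (exists t, tree_size t = m /\ eq_on m (Krel t) r).
Variable r : nat -> nat -> Prop.
Hypotheses (rn : nc_equiv n r) (n0 : 0 < n).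

Lemma exists_Prel_eq_on : exists t, tree_size t = n /\ eq_on n (Prel t) r.
Proof.
have [rf sy _ _] := rn.
have [m [m0 mn r1m maxm]] := last_witness (rf 1 isT n0) n0.
have [_ [s [ss Es]]] :=
  @IH (m - 1) ltac:(lia) _ (nc_equiv_shift rn (ltac:(lia) : 1 + (m - 1) <= n)).
have [[u [su Eu]] _] :=
  @IH (n - m) ltac:(lia) _ (nc_equiv_shift rn (ltac:(lia) : m + (n - m) <= n)).
exists (Node s u); split; first by rewrite /= ss su; lia.
move=> x y x0 xn y0 yn; rewrite /= ss.
have mE : (m - 1).+1 = m by lia.
case: (leqP x m) => xm; case: (leqP y m) => ym.
- rewrite rel_concat_l ?mE //.
  apply: eq_on_merge1_succ; rewrite ?mE //; try lia.
  + exact: nc_equiv_le rn mn.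
  + by apply: eq_on_trans Es _ => a b *; rewrite !addn1.
- split => H; exfalso; first by move: H; apply: rel_concat_cross; lia.
  by apply: (nc_equiv_cut_last rn m0 mn r1m maxm) H; lia.
- split => H; exfalso; first by move: H; apply: rel_concat_cross; lia.
  by apply: (nc_equiv_cut_last rn m0 mn r1m maxm) (sy _ _ _ _ _ _ H); lia.
- rewrite rel_concat_r ?mE // Eu; try lia.
  by rewrite !subnK //; lia.
Qed.

Lemma exists_Krel_eq_on : exists t, tree_size t = n /\ eq_on n (Krel t) r.
Proof.
have [rf sy _ _] := rn.
have [m [m0 mn rmn minm]] := @first_witness (r^~ n) n (rf n n0 (leqnn n)) n0.
have [[s [ss Es]] _] := @IH (m - 1) ltac:(lia) _ (nc_equiv_le rn (ltac:(lia) : m - 1 <= n)).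
have [_ [u [su Eu]]] :=
  @IH (n - m) ltac:(lia) _ (nc_equiv_shift rn (ltac:(lia) : m + (n - m) <= n)).
exists (Node s u); split; first by rewrite /= ss su; lia.
move=> x y x0 xn y0 yn; rewrite /= ss su.
case: (leqP x (m - 1)) => xm; case: (leqP y (m - 1)) => ym.
- by rewrite rel_concat_l // Es.
- split => H; exfalso; first by move: H; apply: rel_concat_cross; lia.
  by apply: (nc_equiv_cut_first rn m0 mn rmn minm x0 _ _ yn H); lia.
- split => H; exfalso; first by move: H; apply: rel_concat_cross; lia.
  by apply: (nc_equiv_cut_first rn m0 mn rmn minm y0 _ _ xn (sy _ _ _ _ _ _ H)); lia.
- rewrite rel_concat_r //.
  have shifted := nc_equiv_shift rn (ltac:(lia) : m - 1 + (n - m).+1 <= n).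
  rewrite (eq_on_merge1_succ shifted); try lia.
  + by rewrite !subnK //; lia.
  + have -> : 1 + (m - 1) = m by lia.
    by have -> : (n - m).+1 + (m - 1) = n by lia.
  + apply: eq_on_trans Eu _ => a b *.
    have -> : a.+1 + (m - 1) = a + m by lia.
    by have -> : b.+1 + (m - 1) = b + m by lia.
Qed.

End TreeOfNcEquiv.

Lemma exists_tree_eq_on n r : nc_equiv n r ->
  (exists t, tree_size t = n /\ eq_on n (Prel t) r) /\
  (exists t, tree_size t = n /\ eq_on n (Krel t) r).
Proof.
elim/ltn_ind: n r => n IH r rn.
have [->|n0] := posnP n; first by split; exists Leaf; split => // x y *; lia.
by split; [apply: exists_Prel_eq_on | apply: exists_Krel_eq_on].
Qed.

Lemma is_kreweras_unique n P Q Q' : is_kreweras n P Q -> is_kreweras n P Q' -> Q = Q'.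
Proof.
move=> [NQ [ncQ maxQ]] [NQ' [ncQ' maxQ']].
apply: (partition_eq_of_same_block NQ.1 NQ'.1) => x y *.
by split; apply: same_block_refines; [apply: maxQ' | apply: maxQ].
Qed.

Lemma phi_Rt_pcup t : phi (Rt t) = pcup (Ppart t) (Kpart t).
Proof.
have [hP hK] := is_partition_Ppart_Kpart t; have [EP EK] := same_block_Ppart_Kpart t.
have := is_partition_phi (Rt t); rewrite tree_size_Rt => hphi.
apply: (partition_eq_of_same_block hphi (is_partition_pcup hP hK)) => x y x0 xn y0 yn.
rewrite (@same_block_phi (Rt t)) ?tree_size_Rt //.
have [i [i0 [iN [->|->]]]] := odd_or_even_index x0 xn;
  have [j [j0 [jN [->|->]]]] := odd_or_even_index y0 yn;
  have [Hoo Hee Hoe Heo] := parity_split_phi_rel_Rt i0 iN j0 jN.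
- by rewrite Hoo (same_block_pcup_odd _ hP) // EP.
- by split => // /(not_same_block_pcup_odd_even hP i0 j0).
- by split => // /same_block_sym /(not_same_block_pcup_odd_even hP j0 i0).
- by rewrite Hee (same_block_pcup_even _ hK) // EK.
Qed.

Lemma NCP_phi_Rt t : NCP (2 * tree_size t) (phi (Rt t)).
Proof.
rewrite -tree_size_Rt.
exact: NCP_of_nc_equiv (is_partition_phi _) (nc_equiv_phi_rel _) (@same_block_phi _).
Qed.

Lemma NCP_Ppart t : NCP (tree_size t) (Ppart t).
Proof.
exact: NCP_of_nc_equiv (is_partition_Ppart_Kpart t).1 (nc_equiv_Prel_Krel t).1
  (same_block_Ppart_Kpart t).1.
Qed.

Lemma NCP_Kpart t : NCP (tree_size t) (Kpart t).
Proof.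
exact: NCP_of_nc_equiv (is_partition_Ppart_Kpart t).2 (nc_equiv_Prel_Krel t).2
  (same_block_Ppart_Kpart t).2.
Qed.

Lemma is_kreweras_Kpart t : is_kreweras (tree_size t) (Ppart t) (Kpart t).
Proof.
have [hP hK] := is_partition_Ppart_Kpart t; have [EP EK] := same_block_Ppart_Kpart t.
split; first exact: NCP_Kpart.
split; first by rewrite -phi_Rt_pcup; exact: (NCP_phi_Rt t).2.
move=> Q [hQ _] nc; apply: (refines_of_same_block hQ hK) => x y Qxy.
have [x0 [xn [y0 yn]]] := same_block_range hQ Qxy.
by apply/EK => //; apply: Krel_max hP hQ EP nc _ _ Qxy.
Qed.

Theorem proposition3 (n : nat) (S : setpart) :
  (exists t : tree, tree_size t = n /\ phi (Rt t) = S) <->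
  (exists P Q : setpart, NCP n P /\ is_kreweras n P Q /\ S = pcup P Q).
Proof.
split.
- move=> [t [<- <-]]; exists (Ppart t), (Kpart t).
  by split; [exact: NCP_Ppart | split; [exact: is_kreweras_Kpart | exact: phi_Rt_pcup]].
- move=> [P [Q [NP [KQ ->]]]].
  have [[t [tn EP]] _] := exists_tree_eq_on (nc_equiv_same_block NP); subst n.
  have PtP : Ppart t = P.
    apply: (partition_eq_of_same_block (NCP_Ppart t).1 NP.1).
    exact: eq_on_trans (same_block_Ppart_Kpart t).1 EP.
  have QtQ : Kpart t = Q by apply: is_kreweras_unique KQ; rewrite -PtP; exact: is_kreweras_Kpart.
  by exists t; rewrite phi_Rt_pcup PtP QtQ.
Qed.
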